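(* Let $n\ge3$ and let $\mathcal D_n$ be a minimal DFA with state set $Q_n=\{0,\dots,n-1\}$ and initial state $0$ recognizing a left ideal, with transition semigroup $T_n$. If every chain of states of $\mathcal D_n$ strictly ordered by $\prec$ has at most $2$ elements (i.e., a maximal-length such chain has length $2$), then $|T_n|\le n^{n-1}+n-1$ and $T_n$ is a subsemigroup of $S_n$.
   Context: A left ideal is a nonempty $L$ with $L=\Sigma^*L$. For a state $q$, $K_q$ is the language accepted from $q$; $p\prec q$ means $K_p\subsetneq K_q$. The transition semigroup is the set of state transformations induced by nonempty words. Notation: $(p\to q)$ maps $p$ to $q$ and fixes other states; $(Q_n\to q)$ is constant; $(p_0,\dots,p_{k-1})$ is a cyclic permutation fixing other states. $S_n$ is the transition semigroup of the DFA with states $Q_n$, initial $0$, final $\{n-1\}$, alphabet $\{a,b,c,d,e\}$, with $a\colon(1,2,\dots,n-1)$, $b\colon(1,2)$, $c\colon(n-1\to1)$, $d\colon(n-1\to0)$, $e\colon(Q_n\to1)$. *)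

From mathcomp Require Import all_boot all_fingroup.
From mathcomp Require Import boolp.
Set Implicit Arguments. Unset Strict Implicit. Unset Printing Implicit Defensive.

(* A DFA over the alphabet [Sigma] with state set 'I_n is given by its
   transition function [delta] and its set of final states [F]. *)

Definition dstar (Sigma : finType) (n : nat) (delta : Sigma -> 'I_n -> 'I_n)
  (w : seq Sigma) (q : 'I_n) : 'I_n :=
  foldl (fun p a => delta a p) q w.

Definition Klang (Sigma : finType) (n : nat) (delta : Sigma -> 'I_n -> 'I_n)
  (F : {set 'I_n}) (q : 'I_n) (w : seq Sigma) : Prop :=
  dstar delta w q \in F.

Definition left_ideal (Sigma : finType) (L : seq Sigma -> Prop) : Prop :=
  (exists w, L w) /\
  (forall w, L w <-> exists u v, w = u ++ v /\ L v).

Definition minimal_dfa (Sigma : finType) (n : nat) (delta : Sigma -> 'I_n -> 'I_n)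
  (F : {set 'I_n}) (q0 : 'I_n) : Prop :=
  (forall q, exists w, dstar delta w q0 = q) /\
  (forall p q, (forall w, Klang delta F p w <-> Klang delta F q w) -> p = q).

Definition prec (Sigma : finType) (n : nat) (delta : Sigma -> 'I_n -> 'I_n)
  (F : {set 'I_n}) (p q : 'I_n) : Prop :=
  (forall w, Klang delta F p w -> Klang delta F q w) /\
  (exists w, Klang delta F q w /\ ~ Klang delta F p w).

Definition word_tr (Sigma : finType) (n : nat) (delta : Sigma -> 'I_n -> 'I_n)
  (w : seq Sigma) : {ffun 'I_n -> 'I_n} := [ffun q => dstar delta w q].

Definition trans_sg (Sigma : finType) (n : nat) (delta : Sigma -> 'I_n -> 'I_n)
  : {set {ffun 'I_n -> 'I_n}} :=
  [set t | `[< exists w : seq Sigma, w <> [::] /\ t = word_tr delta w >]].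

(* turn a nat function into a transformation of 'I_n (values out of range
   are never produced by the functions below when n >= 3) *)
Definition natf (n : nat) (f : nat -> nat) (q : 'I_n) : 'I_n := insubd q (f q).

(* The letters a, b, c, d, e of the DFA defining S_n, indexed by 'I_5 *)
Definition Sletter (n : nat) (x : 'I_5) (q : nat) : nat :=
  match val x with
  | 0 =>
      if q == 0 then 0 else if q == n.-1 then 1 else q.+1
  | 1 =>
      if q == 1 then 2 else if q == 2 then 1 else q
  | 2 =>
      if q == n.-1 then 1 else q
  | 3 =>
      if q == n.-1 then 0 else q
  | _ =>
      1
  end.

Definition S_delta (n : nat) (x : 'I_5) : 'I_n -> 'I_n := natf (Sletter n x).

Definition S_sg (n : nat) : {set {ffun 'I_n -> 'I_n}} := trans_sg (@S_delta n).

Definition relabel (n : nat) (pi : {perm 'I_n}) (t : {ffun 'I_n -> 'I_n})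
  : {ffun 'I_n -> 'I_n} := [ffun q => pi (t ((pi^-1)%g q))].

From mathcomp Require Import all_boot all_fingroup.
From mathcomp Require Import zify boolp.
Set Implicit Arguments. Unset Strict Implicit. Unset Printing Implicit Defensive.

(* Since the language is a left ideal, K_0 is contained in every K_q.  Hence a
   word that moves 0 gives 0 < w(0), and if it is not constant then
   w(0) < w(q) for some q: a chain of length 3.  So every transformation of T_n
   fixes 0 or is constant, and there are at most n^(n-1) + n - 1 of these.
   Conversely S_n contains all of them: a and b generate the permutations of
   {1, ..., n-1}, conjugating c and d by these gives every (p -> q) with p <> 0,
   such maps and permutations generate all transformations fixing 0, and e
   gives the constants.  So T_n sits in S_n without relabelling the states. *)

Definition mv (T : eqType) (y z : T) (q : T) : T := if q == y then z else q.

Lemma codom_full_injective (T : finType) (f : T -> T) :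
  (forall y, y \in codom f) -> injective f.
Proof.
move=> onto; apply/injectiveP/card_uniqP; rewrite size_codom.
by apply: eq_card => y; rewrite onto.
Qed.

Definition fix_or_const (T : finType) (x0 : T) : {set {ffun T -> T}} :=
  [set t : {ffun T -> T} | (t x0 == x0) || [exists p, t == [ffun _ => p]]].

Lemma card_fix_or_const (T : finType) (x0 : T) :
  #|fix_or_const x0| <= #|T| ^ #|T|.-1 + #|T|.-1.
Proof.
pose fixing := [set t in pffun_on x0 [set~ x0] T].
pose consts := [set ([ffun _ => p] : {ffun T -> T}) | p in [set~ x0]].
have sub : fix_or_const x0 \subset fixing :|: consts.
  apply/subsetP => t; rewrite !inE => /orP [/eqP t0 | /existsP [p /eqP tE]].
    apply/orP; left; apply/pffun_onP; split => //.
    by apply/subsetP => x; rewrite !inE; apply: contra => /eqP->; rewrite t0.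
  have [p0 | p_neq0] := eqVneq p x0.
    apply/orP; left; apply/pffun_onP; split => //.
    by apply/subsetP => x; rewrite !inE tE !ffunE p0 eqxx.
  by apply/orP; right; apply/imsetP; exists p; rewrite ?inE.
rewrite (leq_trans (subset_leq_card sub)) // (leq_trans (leq_card_setU _ _)) //.
rewrite cardsE card_pffun_on cardsC1 leq_add2l.
by rewrite (leq_trans (leq_imset_card _ _)) // cardsC1.
Qed.

Section TransformationSubmonoid.

Variables (T : finType) (G : (T -> T) -> Prop).
Hypothesis G_id : G id.
Hypothesis G_comp : forall f g, G f -> G g -> G (g \o f).
Hypothesis G_ext : forall f g, f =1 g -> G f -> G g.

Lemma G_iter f k : G f -> G (iter k f).
Proof. by move=> Gf; elim: k => [|k IH] //=; apply: G_ext (G_comp IH Gf). Qed.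

(* The inverse of a permutation is one of its powers. *)
Lemma G_permV (s : {perm T}) : G s -> G (s^-1)%g.
Proof.
move=> Gs; apply: G_ext (G_iter #[s]%g.-1 Gs) => q; apply: (@perm_inj _ s).
by rewrite permKV -iterS -permX prednK ?order_gt0 // expg_order perm1.
Qed.

Lemma G_conj (s : {perm T}) f : G s -> G f -> G (s \o f \o (s^-1)%g).
Proof. by move=> Gs Gf; apply: G_comp (G_comp (G_permV Gs) Gf) Gs. Qed.

Lemma G_tpermJ (s : {perm T}) x y :
  G s -> G (tperm x y) -> G (tperm (s x) (s y)).
Proof.
move=> Gs Gt; apply: G_ext (G_conj Gs Gt) => q.
by rewrite -tpermJ conjgE !permM.
Qed.

Lemma mvJ (s : {perm T}) y z q : s (mv y z ((s^-1)%g q)) = mv (s y) (s z) q.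
Proof.
by rewrite /mv -(inj_eq (@perm_inj _ s)) permKV; case: eqP; rewrite ?permKV.
Qed.

Lemma G_mvJ (s : {perm T}) y z : G s -> G (mv y z) -> G (mv (s y) (s z)).
Proof. by move=> Gs Gm; apply: G_ext (G_conj Gs Gm) => q; apply: mvJ. Qed.

Variable x0 : T.
Hypothesis G_tperm : forall x y, x != x0 -> y != x0 -> G (tperm x y).

Lemma G_injective_fixing f : injective f -> f x0 = x0 -> G f.
Proof.
move=> finj fx0; have [k] := ubnP #|[pred q | f q != q]|.
elim: k f finj fx0 => // k IH f finj fx0 lt_k.
have [x /= fx_neq | fid] := pickP [pred q | f q != q]; last first.
  by apply: G_ext G_id => q; apply/esym/eqP/negbFE/fid.
set y := f x; pose h := tperm x y \o f.
have x_neq0 : x != x0 by apply: contra fx_neq => /eqP->; rewrite fx0.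
have y_neq0 : y != x0 by rewrite -fx0 (inj_eq finj).
have fE : tperm x y \o h =1 f by move=> q; rewrite /h /= tpermK.
apply: G_ext fE (G_comp _ (G_tperm x_neq0 y_neq0)).
apply: IH; first exact: inj_comp (@perm_inj _ _) finj.
  by rewrite /h /= fx0 tpermD.
rewrite -ltnS (leq_trans _ lt_k) // ltnS; apply: proper_card; apply/properP; split.
  apply/subsetP => q; apply: contra => /eqP fq; rewrite /h /= fq.
  have q_neq_x : q != x by apply: contra fx_neq => /eqP <-; rewrite fq.
  by rewrite tpermD // ?(eq_sym x) // /y -fq (inj_eq finj) eq_sym.
by exists x; rewrite !inE /h /= ?tpermR ?eqxx.
Qed.

Hypothesis G_mv : forall y z, y != x0 -> G (mv y z).

(* Induction on the defect [#|T| - #|codom f|]: if [f a = f b] with [a != b],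
   redirect [b] to a point [y] outside the image, which enlarges the image,
   and recover [f] by composing with [mv y (f b)]. *)
Lemma G_fixing f : f x0 = x0 -> G f.
Proof.
move=> fx0; have [k] := ubnP (#|T| - #|codom f|).
elim: k f fx0 => // k IH f fx0 lt_k.
have [finj|noninj] := injectiveP f; first exact: G_injective_fixing.
have [a [b [a_neq_b fab b_neq0]]] : exists a b, [/\ a != b, f a = f b & b != x0].
  have /injectivePn [a [b a_neq_b fab]] : ~~ injectiveb f by apply/injectiveP.
  have [b0|] := eqVneq b x0; last by exists a, b.
  by exists b, a; split; [rewrite eq_sym | | rewrite -b0].
have [y y_notin] : exists y, y \notin codom f.
  have [y y_notin | onto] := pickP [pred y | y \notin codom f]; first by exists y.
  by case: noninj; apply: codom_full_injective => y; apply/negbNE/negbT/onto.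
pose g q := if q == b then y else f q.
have fE : mv y (f b) \o g =1 f.
  move=> q; rewrite /mv /= /g.
  have [->|_] := eqVneq q b; first by rewrite !eqxx.
  case: eqP => // fq.
  by case/negP: y_notin; rewrite -fq codom_f.
have y_neq0 : y != x0 by apply: contraNneq y_notin => ->; rewrite -fx0 codom_f.
apply: G_ext fE (G_comp _ (G_mv _ y_neq0)).
apply: IH; first by rewrite /g eq_sym (negbTE b_neq0).
have sub_fg : codom f \subset codom g.
  apply/subsetP => _ /codomP [q ->]; apply/codomP.
  have [->|q_neq_b] := eqVneq q b; [exists a | exists q];
    by rewrite /g ?(negbTE a_neq_b) ?(negbTE q_neq_b).
have lt_fg : #|codom f| < #|codom g|.
  apply/proper_card/properP; split => //; exists y => //.
  by apply/codomP; exists b; rewrite /g eqxx.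
rewrite -ltnS (leq_trans _ lt_k) // ltnS ltn_sub2l // (leq_trans lt_fg) //.
exact: max_card.
Qed.

End TransformationSubmonoid.

Lemma dstar_cat (Sigma : finType) m (delta : Sigma -> 'I_m -> 'I_m) u v q :
  dstar delta (u ++ v) q = dstar delta v (dstar delta u q).
Proof. by rewrite /dstar foldl_cat. Qed.

Definition realized (Sigma : finType) m (delta : Sigma -> 'I_m -> 'I_m)
    (f : 'I_m -> 'I_m) : Prop :=
  exists2 w : seq Sigma, w != [::] & dstar delta w =1 f.

Section Realized.

Variables (Sigma : finType) (m : nat) (delta : Sigma -> 'I_m -> 'I_m).

Lemma realized_letter x : realized delta (delta x).
Proof. by exists [:: x]. Qed.

Lemma realized_comp f g :
  realized delta f -> realized delta g -> realized delta (g \o f).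
Proof.
move=> [u u_neq fE] [v _ gE]; exists (u ++ v); first by case: u u_neq {fE}.
by move=> q; rewrite dstar_cat fE gE.
Qed.

Lemma realized_ext f g : f =1 g -> realized delta f -> realized delta g.
Proof. by move=> fg [w w_neq wE]; exists w => // q; rewrite wE fg. Qed.

Lemma realized_trans_sg (t : {ffun 'I_m -> 'I_m}) :
  realized delta t -> t \in trans_sg delta.
Proof.
move=> [w /eqP w_neq wE]; rewrite inE; apply/asboolP; exists w; split => //.
by apply/ffunP => q; rewrite ffunE wE.
Qed.

End Realized.

Section LeftIdealDFA.

Variables (Sigma : finType) (m : nat) (delta : Sigma -> 'I_m -> 'I_m).
Variables (F : {set 'I_m}) (q0 : 'I_m).

Local Notation K := (Klang delta F).

Lemma Klang_cat q u v : K q (u ++ v) = K (dstar delta u q) v.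
Proof. by rewrite /Klang dstar_cat. Qed.

Lemma Klang_dstar_sub p q u :
  (forall v, K p v -> K q v) ->
  forall v, K (dstar delta u p) v -> K (dstar delta u q) v.
Proof. by move=> pq v; rewrite -!Klang_cat; apply: pq. Qed.

Hypothesis minimal : minimal_dfa delta F q0.
Hypothesis ideal : left_ideal (K q0).

Lemma Klang_init_sub q v : K q0 v -> K q v.
Proof.
have [u <-] := minimal.1 q; rewrite -Klang_cat => Kv.
by apply/(ideal.2 _).2; exists u, v.
Qed.

Lemma prec_of_sub p q : p != q -> (forall v, K p v -> K q v) -> prec delta F p q.
Proof.
move=> p_neq_q pq; split => //.
case: (pselect (exists v, K q v /\ ~ K p v)) => // no_sep.
case/eqP: p_neq_q; apply: minimal.2 => v; split => [|Kq]; first exact: pq.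
rewrite /Klang; apply/negPn/negP => nKp; apply: no_sep.
by exists v; split => //; apply/negP.
Qed.

Hypothesis no_chain : ~ exists p q r : 'I_m, prec delta F p q /\ prec delta F q r.

Lemma dstar_fix_or_const w :
  dstar delta w q0 = q0 \/ forall q, dstar delta w q = dstar delta w q0.
Proof.
have [|moved] := eqVneq (dstar delta w q0) q0; [by left | right => q].
apply/eqP/negPn/negP => w_neq; apply: no_chain.
exists q0, (dstar delta w q0), (dstar delta w q); split.
  by apply: prec_of_sub; [rewrite eq_sym | apply: Klang_init_sub].
apply: prec_of_sub; first by rewrite eq_sym.
by apply: Klang_dstar_sub; apply: Klang_init_sub.
Qed.

Lemma trans_sg_sub_fix_or_const : trans_sg delta \subset fix_or_const q0.
Proof.
apply/subsetP => t; rewrite !inE => /asboolP [w [_ ->]]; rewrite ffunE.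
case: (dstar_fix_or_const w) => [-> | const]; first by rewrite eqxx.
apply/orP; right; apply/existsP; exists (dstar delta w q0).
by apply/eqP/ffunP => q; rewrite !ffunE const.
Qed.

End LeftIdealDFA.

Definition letter_a : 'I_5 := @Ordinal 5 0 isT.
Definition letter_b : 'I_5 := @Ordinal 5 1 isT.
Definition letter_c : 'I_5 := @Ordinal 5 2 isT.
Definition letter_d : 'I_5 := @Ordinal 5 3 isT.
Definition letter_e : 'I_5 := @Ordinal 5 4 isT.

Section SemigroupS.

Variable n : nat.

Local Notation Q := 'I_n.+3.
Local Notation inS := (realized (@S_delta n.+3)).

Definition st k : Q := inord k.

Lemma val_st k : k <= n.+2 -> val (st k) = k.
Proof. exact: inordK. Qed.

Lemma eq_st q k : k <= n.+2 -> (q == st k) = (val q == k).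
Proof. by move=> le_k; rewrite -val_eqE /= val_st. Qed.

Lemma st_neq0 k : 0 < k <= n.+2 -> st k != ord0.
Proof. by case/andP=> k_gt0 le_k; rewrite -val_eqE /= val_st // -lt0n. Qed.

Lemma val_S_delta x (q : Q) : val (S_delta x q) =
  if Sletter n.+3 x q < n.+3 then Sletter n.+3 x q else val q.
Proof. by rewrite /S_delta /natf val_insubd. Qed.

Lemma val_S_delta_a (q : Q) : val (S_delta letter_a q) =
  if val q == 0 then 0 else if val q == n.+2 then 1 else (val q).+1.
Proof.
rewrite val_S_delta /Sletter /=; have := ltn_ord q.
by case: eqP => // _; case: eqP => // q_neq lt_q; rewrite ifT //; lia.
Qed.

Lemma S_delta_b : S_delta letter_b =1 tperm (st 1) (st 2).
Proof.
move=> q; apply: val_inj; rewrite val_S_delta /Sletter /=.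
case: tpermP => [->|->|]; rewrite ?val_st //; try by [].
move=> /eqP; rewrite eq_st // => /negbTE-> /eqP; rewrite eq_st // => /negbTE->.
by rewrite ltn_ord.
Qed.

Lemma S_delta_c : S_delta letter_c =1 mv (st n.+2) (st 1).
Proof.
move=> q; apply: val_inj; rewrite val_S_delta /Sletter /= /mv eq_st //.
by case: eqP => _; rewrite ?val_st ?ltn_ord.
Qed.

Lemma S_delta_d : S_delta letter_d =1 mv (st n.+2) ord0.
Proof.
move=> q; apply: val_inj; rewrite val_S_delta /Sletter /= /mv eq_st //.
by case: eqP => _; rewrite ?ltn_ord.
Qed.

Lemma S_delta_e : S_delta letter_e =1 fun _ => st 1.
Proof. by move=> q; apply: val_inj; rewrite val_S_delta /Sletter /= val_st. Qed.

Lemma S_delta_a_inj : injective (@S_delta n.+3 letter_a).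
Proof.
move=> p q /(congr1 val); rewrite !val_S_delta_a => e; apply: val_inj.
move: e (ltn_ord p) (ltn_ord q).
by case: (val p =P 0); case: (val p =P n.+2);
  case: (val q =P 0); case: (val q =P n.+2); lia.
Qed.

Definition cyc : {perm Q} := perm S_delta_a_inj.

Lemma cyc_st i : 0 < i <= n.+1 -> cyc (st i) = st i.+1.
Proof.
case/andP=> i_gt0 le_i; apply: val_inj.
rewrite permE val_S_delta_a !val_st //; last exact: ltnW.
by rewrite gtn_eqF // ltn_eqF.
Qed.

Lemma inS_id : inS id.
Proof.
exists [:: letter_b; letter_b] => // q.
by rewrite /dstar /= !S_delta_b tpermK.
Qed.

Local Notation inS_tpermJ :=
  (G_tpermJ inS_id (@realized_comp _ _ _) (@realized_ext _ _ _)).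
Local Notation inS_mvJ :=
  (G_mvJ inS_id (@realized_comp _ _ _) (@realized_ext _ _ _)).

Lemma inS_tperm_succ i : 0 < i <= n.+1 -> inS (tperm (st i) (st i.+1)).
Proof.
elim: i => // [[_ _ | i IH /andP [_ le_i]]].
  by apply: realized_ext (realized_letter _ letter_b); apply: S_delta_b.
have -> : st i.+2 = cyc (st i.+1) by rewrite cyc_st //; lia.
have -> : st i.+3 = cyc (st i.+2) by rewrite cyc_st.
apply: inS_tpermJ; last by apply: IH; lia.
by apply: realized_ext (realized_letter _ letter_a) => q; rewrite permE.
Qed.

Lemma inS_tperm1 k : 1 < k <= n.+2 -> inS (tperm (st 1) (st k)).
Proof.
elim: k => // [[//|[|k] IH /andP [_ le_k]]].
  by apply: inS_tperm_succ.
have -> : tperm (st 1) (st k.+3) =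
    tperm (tperm (st k.+2) (st k.+3) (st 1)) (tperm (st k.+2) (st k.+3) (st k.+2)).
  by rewrite tpermL tpermD // eq_sym eq_st ?val_st //; lia.
apply: inS_tpermJ; first by apply: inS_tperm_succ; lia.
by apply: IH; lia.
Qed.

Lemma inS_tperm x y : x != ord0 -> y != ord0 -> inS (tperm x y).
Proof.
have inS_tperm_one q : q != ord0 -> q != st 1 -> inS (tperm (st 1) q).
  rewrite -(val_eqE q ord0) eq_st //= => q_neq0 q_neq1; rewrite -[q]inord_val.
  by apply: inS_tperm1; have := ltn_ord q; lia.
move=> x_neq0 y_neq0; have [<-|x_neq_y] := eqVneq x y.
  by rewrite tperm1; apply: realized_ext inS_id => q; rewrite perm1.
have [x1|x_neq1] := eqVneq x (st 1).
  by rewrite x1; apply: inS_tperm_one => //; rewrite -x1 eq_sym.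
have [y1|y_neq1] := eqVneq y (st 1).
  by rewrite tpermC y1; apply: inS_tperm_one.
have -> : tperm x y = tperm (tperm (st 1) x (st 1)) (tperm (st 1) x y).
  by rewrite tpermL tpermD // eq_sym.
by apply: inS_tpermJ; apply: inS_tperm_one.
Qed.

Lemma inS_mv y z : y != ord0 -> inS (mv y z).
Proof.
move=> y_neq0; have top_neq0 : st n.+2 != ord0 by rewrite st_neq0 ?leqnn.
have [->|z_neq_y] := eqVneq z y.
  by apply: realized_ext inS_id => q; rewrite /mv; case: eqP => [->|].
have [->|z_neq0] := eqVneq z ord0.
  have -> : mv y ord0 = mv (tperm (st n.+2) y (st n.+2)) (tperm (st n.+2) y ord0).
    by rewrite tpermL tpermD.
  apply: inS_mvJ; first exact: inS_tperm.
  by apply: realized_ext (realized_letter _ letter_d); apply: S_delta_d.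
pose p := tperm (st 1) z (st n.+2).
have one_neq_top : st 1 != st n.+2 by rewrite eq_st // val_st.
have p_neq0 : p != ord0.
  rewrite -[ord0](tpermD (x := st 1) (y := z)) ?(inj_eq perm_inj) //.
  by rewrite st_neq0.
have p_neq_z : p != z by rewrite -(tpermL (st 1) z) (inj_eq perm_inj) eq_sym.
have inS_mv_pz : inS (mv p z).
  rewrite -(tpermL (st 1) z); apply: inS_mvJ.
    by apply: inS_tperm; rewrite ?st_neq0.
  by apply: realized_ext (realized_letter _ letter_c); apply: S_delta_c.
have -> : mv y z = mv (tperm p y p) (tperm p y z) by rewrite tpermL tpermD // eq_sym.
by apply: inS_mvJ => //; apply: inS_tperm.
Qed.

Lemma inS_fixing f : f ord0 = ord0 -> inS f.
Proof.
exact: (G_fixing inS_id (@realized_comp _ _ _) (@realized_ext _ _ _)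
                 inS_tperm inS_mv).
Qed.

Lemma inS_const p : inS (fun _ => p).
Proof.
have inS_e : inS (fun _ => st 1).
  by apply: realized_ext (realized_letter _ letter_e); apply: S_delta_e.
have inS_mv1 : inS (mv (st 1) p) by apply: inS_mv; rewrite st_neq0.
by apply: realized_ext (realized_comp inS_e inS_mv1) => q; rewrite /= /mv eqxx.
Qed.

Lemma fix_or_const_sub_S_sg : fix_or_const (ord0 : Q) \subset S_sg n.+3.
Proof.
apply/subsetP => t; rewrite inE => /orP [/eqP t0 | /existsP [p /eqP ->]].
  exact/realized_trans_sg/inS_fixing.
by apply/realized_trans_sg; apply: realized_ext (inS_const p) => q; rewrite ffunE.
Qed.

End SemigroupS.

Lemma relabel1 n (t : {ffun 'I_n -> 'I_n}) : relabel 1%g t = t.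
Proof. by apply/ffunP => q; rewrite ffunE invg1 !perm1. Qed.

Theorem lemma4 (n : nat) (Sigma : finType) (delta : Sigma -> 'I_n -> 'I_n)
  (F : {set 'I_n}) (q0 : 'I_n) :
  3 <= n ->
  nat_of_ord q0 = 0 ->
  minimal_dfa delta F q0 ->
  left_ideal (Klang delta F q0) ->
  (~ exists p q r : 'I_n, prec delta F p q /\ prec delta F q r) ->
  #|trans_sg delta| <= n ^ n.-1 + n - 1 /\
  exists pi : {perm 'I_n},
    forall t, t \in trans_sg delta -> relabel pi t \in S_sg n.
Proof.
move: delta F q0; case: n => [|[|[|n]]] //.
move=> delta F q0 _ q0_0 minimal ideal no_chain.
have q0E : q0 = ord0 by apply: val_inj.
have sub := trans_sg_sub_fix_or_const minimal ideal no_chain; rewrite q0E in sub.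
split.
  rewrite (leq_trans (subset_leq_card sub)) // (leq_trans (card_fix_or_const _)) //.
  by rewrite card_ord addnS subn1.
exists 1%g => t /(subsetP sub) /(subsetP (fix_or_const_sub_S_sg n)).
by rewrite relabel1.
Qed.
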